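(* Let $G=(V,E)$ and $H$ be graphs such that $H$ is obtained from $G$ by a $Q$-switching with switching set $X$. Let $Y\subseteq V\setminus X$ and let $F$ be a set of edges of $G[X\cup Y]$ with $F\cap E(G_X)=\emptyset$. Then $H[X\cup Y]-F$ is obtained from $G[X\cup Y]-F$ by a $Q$-switching with switching set $X$; in particular these two graphs are cospectral.
   Context: Graphs are finite and simple. $Q$ is a $k\times k$ real orthogonal matrix with no integral rows (no row consisting only of integers). $H$ is obtained from $G$ by a $Q$-switching with switching set $X$ ($|X|=k$) if $H$ has the same vertex set $V$ and, after ordering the vertices with $X$ first, $A_H=M^TA_GM$ with $M=\operatorname{diag}(Q,-I_a,I_b)$ block diagonal, $a+b=|V|-k$. For $S\subseteq V$, $G[S]$ and $H[S]$ denote induced subgraphs; $\Gamma-F$ denotes removal of the edges $F$. The neighborhood graph $G_X$ has vertex set $X\cup N(X)$, where $N(X)$ is the set of vertices adjacent to some vertex of $X$, and edge set the edges of $G$ having at least one endpoint in $X$. Two graphs are cospectral if their adjacency matrices have the same spectrum. *)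

From HB Require Import structures.
From mathcomp Require Import all_boot all_order all_algebra.
From mathcomp Require Import reals.
Set Implicit Arguments. Unset Strict Implicit. Unset Printing Implicit Defensive.
Import Order.TTheory GRing.Theory Num.Theory.
Local Open Scope ring_scope.

Definition simple_graph (T : finType) (g : rel T) :=
  symmetric g /\ irreflexive g.

Definition orthogonal_mx (R : realType) (k : nat) (Q : 'M[R]_k) :=
  Q^T *m Q = 1%:M.

Definition no_integral_row (R : realType) (k : nat) (Q : 'M[R]_k) :=
  forall i : 'I_k, exists j : 'I_k, Q i j \notin Num.int.

(* The switching matrix M = diag(Q, -I_a, I_b), written in the original
   (unordered) vertex labelling: f : 'I_k -> T enumerates X in the order
   used for the block Q, and s u = true means u (outside X) gets the -1
   entry (i.e. u belongs to the -I_a block). *)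
Definition switch_mx (R : realType) (T : finType) (k : nat) (Q : 'M[R]_k)
    (X : {set T}) (f : 'I_k -> T) (s : T -> bool) (u v : T) : R :=
  \sum_(i < k) \sum_(j < k) ((f i == u) && (f j == v))%:R * Q i j
  + ((u == v) && (u \notin X))%:R * (-1) ^+ s u.

Definition Qswitching (R : realType) (T : finType) (k : nat) (Q : 'M[R]_k)
    (X : {set T}) (g h : rel T) :=
  exists f : 'I_k -> T, injective f /\ X = [set f i | i in 'I_k] /\
  exists s : T -> bool, forall u v : T,
    (h u v)%:R = \sum_(x : T) \sum_(y : T) switch_mx Q X f s x u * (g x y)%:R
                                                * switch_mx Q X f s y v.

Definition adjmx (R : realType) (T : finType) (g : rel T) : 'M[R]_#|T| :=
  \matrix_(i, j) (g (enum_val i) (enum_val j))%:R.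

(* Cospectral: adjacency matrices have the same spectrum (with multiplicity),
   i.e. the same characteristic polynomial. *)
Definition cospectral (R : realType) (T : finType) (g h : rel T) :=
  char_poly (adjmx R g) = char_poly (adjmx R h).

Definition subV (T : finType) (S : {set T}) : finType := {x : T | x \in S}.

Definition induced_minus (T : finType) (g : rel T) (S : {set T})
    (F : {set {set T}}) : rel (subV S) :=
  fun u v => g (val u) (val v) && ([set val u; val v] \notin F).

Definition sub_set (T : finType) (S : {set T}) (X : {set T}) : {set subV S} :=
  [set x : subV S | val x \in X].
Arguments sub_set {T} S X.
Arguments induced_minus {T} g S F.

From HB Require Import structures.
From mathcomp Require Import all_boot all_order all_algebra.
From mathcomp Require Import reals.
Set Implicit Arguments. Unset Strict Implicit. Unset Printing Implicit Defensive.
Import Order.TTheory GRing.Theory Num.Theory.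
Local Open Scope ring_scope.

(* The switching matrix M is block diagonal with respect to X and its
   complement, so an entry M x u with x or u outside X vanishes unless
   x = u.  Hence the only pairs (x, y) contributing to
   (M^T A M) u v = \sum_(x, y) M x u A x y M y v are either diagonal
   (x = u, y = v) or have an endpoint in X.  Removing edges F that avoid X
   therefore commutes with the switching, and restricting to a vertex set
   S containing X is harmless since M is zero between S and its
   complement.  Cospectrality holds because M is orthogonal, so
   A_H = M^T A_G M is similar to A_G. *)

Section SwitchMatrix.

Variables (R : realType) (T : finType) (k : nat) (Q : 'M[R]_k).
Variables (X : {set T}) (f : 'I_k -> T) (s : T -> bool).
Hypothesis defX : X = [set f i | i in 'I_k].

Local Notation M := (switch_mx Q X f s).

Lemma mem_switch_set i : f i \in X.
Proof. by rewrite defX imset_f. Qed.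

Lemma switch_mx_out x u : ~~ ((x \in X) && (u \in X)) ->
  M x u = ((x == u) && (x \notin X))%:R * (-1) ^+ s x.
Proof.
move=> xuX; rewrite /switch_mx big1 ?add0r // => i _; rewrite big1 // => j _.
suff /negbTE-> : ~~ ((f i == x) && (f j == u)) by rewrite mul0r.
by apply: contra xuX => /andP[/eqP <- /eqP <-]; rewrite !mem_switch_set.
Qed.

Lemma switch_mx_support x u : M x u != 0 -> (x == u) || (x \in X) && (u \in X).
Proof.
apply: contraTT; rewrite negb_or => /andP[/negbTE xu xuX].
by rewrite negbK switch_mx_out // xu mul0r.
Qed.

Lemma switch_mx_outside (S : {set T}) x u :
  X \subset S -> x \notin S -> u \in S -> M x u = 0.
Proof.
move=> sXS xS uS; have xX : x \notin X by apply: contra xS; apply: subsetP.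
have /negbTE xu : x != u by apply: contraNneq xS => ->.
by rewrite switch_mx_out ?(negbTE xX) // xu mul0r.
Qed.

Lemma switch_mx_support_rel (p : rel T) x y u v :
  (forall a b, (a \in X) || (b \in X) -> p a b) ->
  M x u != 0 -> M y v != 0 -> p x y = p u v.
Proof.
move=> pX /switch_mx_support/orP[/eqP-> | /andP[xX uX]]; last first.
  by rewrite !pX ?xX ?uX.
move=> /switch_mx_support/orP[/eqP-> // | /andP[yX vX]].
by rewrite !pX ?yX ?vX ?orbT.
Qed.

Lemma sum_switch_mx_restrict (S : {set T}) (w : T -> T -> R) u v :
  X \subset S -> u \in S -> v \in S ->
  \sum_x \sum_y M x u * w x y * M y v
  = \sum_(x in S) \sum_(y in S) M x u * w x y * M y v.
Proof.
move=> sXS uS vS; rewrite (bigID (mem S)) /= [X in _ + X]big1 ?addr0 => [|x xS].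
  apply: eq_bigr => x _; rewrite (bigID (mem S)) /= [X in _ + X]big1 ?addr0 //.
  by move=> y yS; rewrite (switch_mx_outside sXS yS vS) mulr0.
by rewrite big1 // => y _; rewrite (switch_mx_outside sXS xS uS) !mul0r.
Qed.

Hypothesis f_inj : injective f.

Lemma switch_mx_in i j : M (f i) (f j) = Q i j.
Proof.
rewrite /switch_mx mem_switch_set andbF mul0r addr0.
rewrite (bigD1 i) //= [X in _ + X]big1 ?addr0 => [|i' i'i]; last first.
  by rewrite big1 // => j' _; rewrite (inj_eq f_inj) (negbTE i'i) mul0r.
rewrite (bigD1 j) //= [X in _ + X]big1 ?addr0 => [|j' j'j].
  by rewrite !eqxx mul1r.
by rewrite eqxx (inj_eq f_inj) (negbTE j'j) mul0r.
Qed.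

Lemma switch_mx_orthogonal u v :
  orthogonal_mx Q -> \sum_x M x u * M x v = (u == v)%:R.
Proof.
move=> /matrixP orthQ.
have out_u a b : a \notin X -> \sum_x M x a * M x b = (a == b)%:R.
  move=> aX; rewrite (bigD1 a) //= big1 ?addr0 => [|x xa]; last first.
    by rewrite switch_mx_out ?(negbTE aX) ?andbF // (negbTE xa) !mul0r.
  rewrite !switch_mx_out ?(negbTE aX) ?andbF // eqxx mul1r andbT.
  by case: eqP => _; rewrite ?mul1r -?expr2 ?sqrr_sign ?mul0r ?mulr0.
have [uX|] := boolP (u \in X); last exact: out_u.
have [vX|vX] := boolP (v \in X); last first.
  by rewrite eq_sym -out_u //; apply: eq_bigr => x _; rewrite mulrC.
rewrite (bigID (mem X)) /= [X in _ + X]big1 ?addr0 => [|x xX]; last first.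
  have /negbTE xu : x != u by apply: contraNneq xX => ->.
  by rewrite switch_mx_out ?(negbTE xX) // xu !mul0r.
move: uX vX; rewrite {1 2}defX => /imsetP[a _ ->] /imsetP[b _ ->].
rewrite (inj_eq f_inj); have := orthQ a b; rewrite !mxE => <-.
rewrite (eq_bigl [in [set f i | i in 'I_k]]) => [|x]; last by rewrite defX.
rewrite big_imset /=; last by move=> ? ? _ _ /f_inj.
by apply: eq_bigr => i _; rewrite !switch_mx_in mxE.
Qed.

End SwitchMatrix.

Lemma char_poly_conj (R : comNzRingType) n (A P P' : 'M[R]_n) :
  P' *m P = 1%:M -> char_poly (P' *m A *m P) = char_poly A.
Proof.
move=> PP'; rewrite /char_poly /char_poly_mx.
set c := map_mx (@polyC R).
have cPP' : c P' *m c P = 1%:M by rewrite -map_mxM PP' map_mx1.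
rewrite /c 2!map_mxM -/c.
rewrite [X in \det (X - _)](_ : _ = c P' *m 'X%:M *m c P); last first.
  by rewrite scalar_mxC -mulmxA cPP' mulmx1.
by rewrite -mulmxBl -mulmxBr !det_mulmx mulrAC -det_mulmx cPP' det1 mul1r.
Qed.

Lemma Qswitching_cospectral (R : realType) (T : finType) (k : nat)
    (Q : 'M[R]_k) (X : {set T}) (g h : rel T) :
  orthogonal_mx Q -> Qswitching Q X g h -> cospectral R g h.
Proof.
move=> orthQ [f [f_inj [defX [s defh]]]].
pose P : 'M[R]_#|T| := \matrix_(i, j) switch_mx Q X f s (enum_val i) (enum_val j).
have sum_enum (F : T -> R) : \sum_x F x = \sum_(i < #|T|) F (enum_val i).
  by rewrite (reindex _ (onW_bij _ (@enum_val_bij T))).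
have orthP : P^T *m P = 1%:M.
  apply/matrixP => i j; rewrite !mxE -(inj_eq enum_val_inj).
  rewrite -(switch_mx_orthogonal s defX f_inj _ _ orthQ) sum_enum.
  by apply: eq_bigr => l _; rewrite !mxE.
rewrite /cospectral; suff -> : adjmx R h = P^T *m adjmx R g *m P.
  by rewrite char_poly_conj.
apply/matrixP => i j; rewrite !mxE defh sum_enum.
under eq_bigr do rewrite sum_enum.
rewrite exchange_big; apply: eq_bigr => b _; rewrite !mxE mulr_suml.
by apply: eq_bigr => a _; rewrite !mxE.
Qed.

Section InducedSwitching.

Variables (R : realType) (T : finType) (k : nat) (Q : 'M[R]_k).
Variables (X S : {set T}) (f : 'I_k -> T) (s : T -> bool).
Hypotheses (defX : X = [set f i | i in 'I_k]) (sXS : X \subset S).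

Let mem_S i : f i \in S.
Proof. exact/(subsetP sXS)/mem_switch_set. Qed.

Definition sub_switch_fun (i : 'I_k) : subV S := exist _ (f i) (mem_S i).

Lemma sub_set_switch : sub_set S X = [set sub_switch_fun i | i in 'I_k].
Proof.
apply/setP => x; rewrite inE defX.
apply/imsetP/imsetP => [[i _ fi_x]|[i _ ->]]; last by exists i.
by exists i => //; apply: val_inj.
Qed.

Lemma sub_switch_fun_inj : injective f -> injective sub_switch_fun.
Proof. by move=> f_inj i j /(congr1 val)/f_inj. Qed.

Lemma switch_mx_sub (x u : subV S) :
  switch_mx Q (sub_set S X) sub_switch_fun (s \o val) x u
  = switch_mx Q X f s (val x) (val u).
Proof. by rewrite /switch_mx inE. Qed.

Lemma Qswitching_induced_minus (g h : rel T) (F : {set {set T}}) :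
  (forall a b, (a \in X) || (b \in X) -> [set a; b] \notin F) ->
  injective f ->
  (forall u v, (h u v)%:R = \sum_x \sum_y
     switch_mx Q X f s x u * (g x y)%:R * switch_mx Q X f s y v) ->
  Qswitching Q (sub_set S X) (induced_minus g S F) (induced_minus h S F).
Proof.
move=> FX f_inj defh; exists sub_switch_fun.
split; first exact: sub_switch_fun_inj.
split; first exact: sub_set_switch.
exists (s \o val) => u v; rewrite /induced_minus -mulnb natrM defh.
rewrite (sum_switch_mx_restrict Q s defX _ sXS (valP u) (valP v)).
rewrite mulr_suml (big_sub (mem S)).
apply: eq_bigr => x _; rewrite mulr_suml (big_sub (mem S)) /=.
apply: eq_bigr => y _; rewrite !switch_mx_sub -mulnb natrM.
set a := switch_mx _ _ _ _ _ (val u); set b := switch_mx _ _ _ _ _ (val v).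
have [->|a0] := eqVneq a 0; first by rewrite !mul0r.
have [->|b0] := eqVneq b 0; first by rewrite !mulr0 mul0r.
rewrite (switch_mx_support_rel defX (p := fun a b => [set a; b] \notin F) FX a0 b0).
by rewrite mulrAC mulrA.
Qed.

End InducedSwitching.

Lemma edge_set_avoid (V : finType) (G : rel V) (X : {set V})
    (F : {set {set V}}) :
  (forall e, e \in F -> exists u v, e = [set u; v] /\ G u v) ->
  (forall u v, G u v -> (u \in X) || (v \in X) -> [set u; v] \notin F) ->
  forall a b, (a \in X) || (b \in X) -> [set a; b] \notin F.
Proof.
move=> FG FX a b abX; apply/negP => /[dup] abF /FG[u [v [uv Guv]]].
suff /(FX _ _ Guv) : (u \in X) || (v \in X) by rewrite -uv abF.
have mem_uv c : c \in [set a; b] -> (c == u) || (c == v) by rewrite uv !inE.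
case/orP: abX => [aX | bX].
  by case/orP: (mem_uv a (set21 a b)) => /eqP <-; rewrite aX ?orbT.
by case/orP: (mem_uv b (set22 a b)) => /eqP <-; rewrite bX ?orbT.
Qed.

Theorem lemma3p3 (R : realType) (V : finType) (k : nat) (Q : 'M[R]_k)
    (G H : rel V) (X Y : {set V}) (F : {set {set V}}) :
  simple_graph G -> simple_graph H ->
  orthogonal_mx Q -> no_integral_row Q ->
  Qswitching Q X G H ->
  Y \subset ~: X ->
  (* F is a set of edges of G[X ∪ Y] *)
  (forall e, e \in F -> exists u v, [/\ e = [set u; v], G u v,
                                       u \in X :|: Y & v \in X :|: Y]) ->
  (* F ∩ E(G_X) = ∅ : no edge of F has an endpoint in X *)
  (forall u v, G u v -> (u \in X) || (v \in X) -> [set u; v] \notin F) ->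
  Qswitching Q (sub_set (X :|: Y) X)
             (induced_minus G (X :|: Y) F) (induced_minus H (X :|: Y) F)
  /\ cospectral R (induced_minus G (X :|: Y) F) (induced_minus H (X :|: Y) F).
Proof.
move=> _ _ orthQ _ [f [f_inj [defX [s defH]]]] _ FG FX.
have F_avoid_X : forall a b, (a \in X) || (b \in X) -> [set a; b] \notin F.
  apply: (edge_set_avoid (G := G)) => // e /FG[u [v [-> Guv _ _]]].
  by exists u, v.
have switched := Qswitching_induced_minus defX (subsetUl X Y) F_avoid_X f_inj defH.
by split; last exact: Qswitching_cospectral orthQ switched.
Qed.
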